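(* If $\gamma=-\phi$ (i.e. $\gamma[b]=-\phi[b]1_{\mathcal B}$ for all $b$), then for $u_1,\dots,u_n\in\mathcal B$, $B_n[X(u_1),\dots,X(u_n)]=\langle a^-(u_1)a^0(u_2)\cdots a^0(u_{n-1})a^+(u_n)\Omega,\Omega\rangle_{\gamma,\phi}$.
   Context: Let $\mathcal B$ be a unital $*$-algebra with star-linear maps $\phi:\mathcal B\to\mathbb C$, $\gamma:\mathcal B\to\mathcal B$, $\Lambda:\mathcal B\otimes_{alg}\mathcal B\to\mathcal B$, where $\phi$ is positive and faithful and $\gamma+\phi$ is completely positive, with $(\gamma+\phi)[b]:=\gamma[b]+\phi[b]1_{\mathcal B}$. Assume $\phi[v^*\Lambda(b\otimes u)]=\phi[\Lambda(b^*\otimes v)^*u]$ and $\gamma[v^*\Lambda(b\otimes u)]=\gamma[\Lambda(b^*\otimes v)^*u]$ for all $b,u,v$. On $\mathcal F_{alg}(\mathcal B)=\mathbb C\Omega\oplus\bigoplus_{n\ge1}\mathcal B^{\otimes n}$ use the form $\langle\Omega,\Omega\rangle_{\gamma,\phi}=1$, $\langle u_1\otimes\cdots\otimes u_n,v_1\otimes\cdots\otimes v_k\rangle_{\gamma,\phi}=\delta_{n=k}\phi[v_n^*(\gamma+\phi)[v_{n-1}^*\cdots(\gamma+\phi)[v_1^*u_1]\cdots u_{n-1}]u_n]$. For $b\in\mathcal B$: $a^+(b)\Omega=b$, $a^+(b)(u_1\otimes\cdots\otimes u_n)=b\otimes u_1\otimes\cdots\otimes u_n$; $a^-(b)\Omega=0$,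 $a^-(b)u_1=\phi[bu_1]\Omega$, $a^-(b)(u_1\otimes\cdots\otimes u_n)=(\gamma+\phi)[bu_1]u_2\otimes\cdots\otimes u_n$ ($n\ge2$); $a^0(b)\Omega=0$, $a^0(b)(u_1\otimes\cdots\otimes u_n)=\Lambda(b\otimes u_1)\otimes u_2\otimes\cdots\otimes u_n$; $X(b)=a^+(b)+a^-(b)+a^0(b)$. Boolean cumulants $B_k$ with respect to $\psi(A)=\langle A\Omega,\Omega\rangle_{\gamma,\phi}$ are defined by $\psi[Y_1\cdots Y_n]=\sum_{\pi\in\mathrm{Int}(n)}\prod_{V\in\pi}B_{|V|}[Y_{V(1)},\dots,Y_{V(|V|)}]$, $\mathrm{Int}(n)$ the interval partitions of $\{1,\dots,n\}$. *)

From HB Require Import structures.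
From mathcomp Require Import all_boot all_order all_algebra.
From mathcomp Require Import complex.
From mathcomp Require Import reals.
Set Implicit Arguments. Unset Strict Implicit. Unset Printing Implicit Defensive.
Import Order.TTheory GRing.Theory Num.Theory.
Local Open Scope ring_scope.

Section Fock.
Variables (R : realType).
Notation C := (R[i])%type.
Variables (B : algType C) (star : B -> B).

Definition is_involution : Prop :=
  [/\ forall x : B, star (star x) = x,
      forall x y : B, star (x + y) = star x + star y,
      forall (a : C) (x : B), star (a *: x) = a^* *: star x
    & forall x y : B, star (x * y) = star y * star x].

Definition pos_elt (x : B) : Prop :=
  exists s : seq B, x = \sum_(y <- s) star y * y.

Definition star_linear_functional (f : B -> C) : Prop :=
  (forall (a : C) (x y : B), f (a *: x + y) = a * f x + f y) /\
  (forall x, f (star x) = (f x)^*).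
Definition star_linear_map (g : B -> B) : Prop :=
  (forall (a : C) (x y : B), g (a *: x + y) = a *: g x + g y) /\
  (forall x, g (star x) = star (g x)).
(** Lambda : B (x)_alg B -> B is given by the bilinear map (b,u) |-> Lambda(b (x) u);
    the involution on B (x) B is (b (x) u)^* = b^* (x) u^*. *)
Definition star_bilinear_map (L : B -> B -> B) : Prop :=
  [/\ forall (a : C) (x y z : B), L (a *: x + y) z = a *: L x z + L y z,
      forall (a : C) (x y z : B), L z (a *: x + y) = a *: L z x + L z y
    & forall x y, L (star x) (star y) = star (L x y)].

Definition positive_functional (f : B -> C) : Prop :=
  forall b : B, 0 <= f (star b * b).
Definition faithful_functional (f : B -> C) : Prop :=
  forall b : B, f (star b * b) = 0 -> b = 0.
Definition completely_positive (g : B -> B) : Prop :=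
  forall (n : nat) (b c : 'I_n -> B),
    pos_elt (\sum_(i < n) \sum_(j < n) star (c i) * g (star (b i) * b j) * c j).

Variables (phi : B -> C) (gamma : B -> B) (Lam : B -> B -> B).

Definition gp (b : B) : B := gamma b + phi b *: 1.

(** ---------- algebraic full Fock space ----------
   A vector is a formal finite linear combination of simple tensors;
   the simple tensor u_1 (x) ... (x) u_n is the word [:: u_1; ...; u_n],
   and Omega is the empty word. *)
Definition fock := seq (C * seq B).
Definition fscale (a : C) (v : fock) : fock := [seq (a * p.1, p.2) | p <- v].
Definition lin_ext (f : seq B -> fock) (v : fock) : fock :=
  flatten [seq fscale p.1 (f p.2) | p <- v].
Definition Omega : fock := [:: (1, [::])].

Definition a_plus (b : B) : fock -> fock :=
  lin_ext (fun w => [:: (1, b :: w)]).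
Definition a_minus (b : B) : fock -> fock :=
  lin_ext (fun w => match w with
                    | [::] => [::]
                    | [:: u1] => [:: (phi (b * u1), [::])]
                    | u1 :: u2 :: w' => [:: (1, (gp (b * u1) * u2) :: w')]
                    end).
Definition a_zero (b : B) : fock -> fock :=
  lin_ext (fun w => match w with
                    | [::] => [::]
                    | u1 :: w' => [:: (1, Lam b u1 :: w')]
                    end).
Definition Xop (b : B) : fock -> fock :=
  fun v => a_plus b v ++ a_minus b v ++ a_zero b v.

(** the form on simple tensors:
   <u_1..u_n, v_1..v_k> = delta_{n=k} phi[v_n^* (g+p)[ ... (g+p)[v_1^* u_1] ... u_{n-1}] u_n] *)
Fixpoint ipaux (x : B) (u v : seq B) : C :=
  match u, v with
  | [:: u1], [:: v1] => phi (star v1 * x * u1)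
  | u1 :: u', v1 :: v' => ipaux (gp (star v1 * x * u1)) u' v'
  | _, _ => 0
  end.
Definition ipw (u v : seq B) : C :=
  match u, v with
  | [::], [::] => 1
  | _, _ => ipaux 1 u v
  end.
Definition inner (v w : fock) : C :=
  \sum_(p <- v) \sum_(q <- w) p.1 * (q.1)^* * ipw p.2 q.2.

Definition opprod (Ys : seq (fock -> fock)) : fock -> fock :=
  foldr (fun f g => f \o g) id Ys.
Definition psi (Ys : seq (fock -> fock)) : C := inner (opprod Ys Omega) Omega.

(** interval partitions of {1,...,n}, encoded by the list of their block sizes
   (a composition of n) *)
Definition interval_partition (n : nat) (c : seq nat) : bool :=
  all (fun k => 0 < k)%N c && (sumn c == n).
Fixpoint blocks {T} (c : seq nat) (s : seq T) : seq (seq T) :=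
  match c with
  | [::] => [::]
  | k :: c' => take k s :: blocks c' (drop k s)
  end.
(** all sequences of length <= len with entries in {0,...,n} (a finite superset
   of the block-size lists of interval partitions of {1,...,n}) *)
Fixpoint seqs_upto (n len : nat) : seq (seq nat) :=
  match len with
  | 0 => [:: [::]]
  | len'.+1 => [::] :: [seq x :: s | x <- iota 0 n.+1, s <- seqs_upto n len']
  end.
Definition boolean_cumulants (Bc : seq (fock -> fock) -> C) : Prop :=
  forall Ys : seq (fock -> fock), (0 < size Ys)%N ->
    psi Ys = \sum_(c <- undup (seqs_upto (size Ys) (size Ys)) | interval_partition (size Ys) c)
       \prod_(V <- blocks c Ys) Bc V.
End Fock.

From HB Require Import structures.
From mathcomp Require Import all_boot all_order all_algebra.
From mathcomp Require Import complex.
From mathcomp Require Import reals.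
From mathcomp Require Import zify.
Set Implicit Arguments. Unset Strict Implicit. Unset Printing Implicit Defensive.
Import Order.TTheory GRing.Theory Num.Theory.
Local Open Scope ring_scope.

(** Since gamma + phi = 0, the annihilator sends [u1 (x) u2 (x) w] to [0 (x) w], so
   tensors of length at least two never return to the vacuum: pulled back along
   X(u), a functional that only sees the vacuum coefficient and the one-particle
   vector stays of that form.  Tracking the pullback along X(u1)...X(un) shows that
   the moments psi[X(u1)...X(un)] are the Boolean moments of
   K(u1, ..., un) = phi[u1 Lambda(u2 (x) Lambda(... Lambda(u(n-1) (x) un)))],
   and Boolean cumulants are determined by the moments through the first-block
   recursion.  Finally <a^-(u1) a^0(u2) ... a^0(u(n-1)) a^+(un) Omega, Omega> is
   K(u1, ..., un) by direct computation. *)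

Definition interval_partitions (n : nat) : seq (seq nat) :=
  [seq c <- undup (seqs_upto n n) | interval_partition n c].

Lemma mem_seqs_upto n len (c : seq nat) :
  all (fun k => 0 < k)%N c -> (sumn c <= n)%N -> (sumn c <= len)%N ->
  c \in seqs_upto n len.
Proof.
elim: len c => [|len IH] [|x c] //.
  by move=> /andP[x_gt0 _] _ /=; lia.
move=> /andP[x_gt0 c_pos]; rewrite [sumn _]/= => le_n le_len.
rewrite in_cons; apply/orP; right; apply/allpairsPdep.
exists x, c; split => //; first by rewrite mem_iota; lia.
by apply: IH => //; lia.
Qed.

Lemma mem_interval_partitions n c :
  (c \in interval_partitions n) = interval_partition n c.
Proof.
rewrite mem_filter mem_undup andb_idr // => /andP[c_pos /eqP sum_c].
by apply: mem_seqs_upto; rewrite ?sum_c.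
Qed.

Lemma interval_partitions_uniq n : uniq (interval_partitions n).
Proof. exact/filter_uniq/undup_uniq. Qed.

Lemma interval_partitions_first_block n : (0 < n)%N ->
  perm_eq (interval_partitions n)
    [seq k :: c | k <- iota 1 n, c <- interval_partitions (n - k)].
Proof.
move=> n_gt0; apply: uniq_perm; first exact: interval_partitions_uniq.
  rewrite allpairs_uniq_dep ?iota_uniq // => [k _|[k c] [k' c'] _ _ /= [-> ->]//].
  exact: interval_partitions_uniq.
move=> c; rewrite mem_interval_partitions; apply/idP/allpairsPdep.
- case: c => [|k c] /andP[/= pos /eqP sum_n]; first lia.
  move: pos => /andP[k_gt0 c_pos].
  exists k, c; rewrite mem_iota mem_interval_partitions /interval_partition c_pos.
  by split => //; [lia | apply/eqP; lia].
- move=> [k [c' [+ + ->]]]; rewrite mem_iota mem_interval_partitions.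
  move=> k_in /andP[c_pos /eqP sum_c]; rewrite /interval_partition /= c_pos andbT.
  by apply/andP; split; [lia | apply/eqP; lia].
Qed.

Lemma big_interval_partitions_first_block {V : nmodType} n (F : seq nat -> V) :
  (0 < n)%N -> \sum_(c <- interval_partitions n) F c =
  \sum_(1 <= k < n.+1) \sum_(c <- interval_partitions (n - k)) F (k :: c).
Proof.
move=> n_gt0; rewrite (perm_big _ (interval_partitions_first_block n_gt0)).
by rewrite big_allpairs_dep /index_iota subSS subn0.
Qed.

Lemma blocks_map {T U : Type} (f : T -> U) (c : seq nat) (s : seq T) :
  blocks c (map f s) = map (map f) (blocks c s).
Proof. by elim: c s => [|k c IH] s //=; rewrite -map_take -map_drop IH. Qed.

Section BooleanMoments.
Context {T : Type} {R : pzSemiRingType}.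
Implicit Types (K : seq T -> R) (w : seq T).

Definition boolean_moment K w : R :=
  \sum_(c <- interval_partitions (size w)) \prod_(V <- blocks c w) K V.

Lemma boolean_moment_nil K : boolean_moment K [::] = 1.
Proof. by rewrite /boolean_moment /= big_seq1 big_nil. Qed.

Lemma boolean_moment_first_block K w : (0 < size w)%N ->
  boolean_moment K w =
  \sum_(1 <= k < (size w).+1) K (take k w) * boolean_moment K (drop k w).
Proof.
move=> w_gt0; rewrite /boolean_moment big_interval_partitions_first_block //.
apply: eq_bigr => k _; rewrite size_drop mulr_sumr.
by apply: eq_bigr => c _; rewrite big_cons.
Qed.

End BooleanMoments.

Lemma boolean_cumulants_unique (T : Type) (R : pzRingType) (K1 K2 : seq T -> R) :
  (forall w, (0 < size w)%N -> boolean_moment K1 w = boolean_moment K2 w) ->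
  forall w, (0 < size w)%N -> K1 w = K2 w.
Proof.
move=> eqM; suff sizeP n w : size w = n.+1 -> K1 w = K2 w.
  by move=> w /prednK/esym; apply: sizeP.
elim/ltn_ind: n w => n IH w sz_w.
have := eqM w; rewrite !boolean_moment_first_block sz_w // => /(_ isT).
rewrite (big_nat_recr n.+1) // (big_nat_recr n.+1) //= -sz_w take_size drop_size.
rewrite !boolean_moment_nil !mulr1.
rewrite (eq_big_nat _ _ (F2 := fun k => K2 (take k w) * boolean_moment K2 (drop k w))).
  by move/addrI.
move=> [|k] // /andP[_ k_lt].
rewrite eqM ?size_drop; last lia.
by rewrite (IH k) ?size_takel //; lia.
Qed.

Section VacuumExpectation.
Context {R : realType} {B : algType R[i]}.
Variables (phi : B -> R[i]) (gamma : B -> B) (Lam : B -> B -> B).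

Definition fock_eval (g : seq B -> R[i]) (v : fock B) : R[i] :=
  \sum_(p <- v) p.1 * g p.2.

Lemma fock_eval_cat g v1 v2 :
  fock_eval g (v1 ++ v2) = fock_eval g v1 + fock_eval g v2.
Proof. exact: big_cat. Qed.

Lemma fock_evalD g1 g2 v :
  fock_eval g1 v + fock_eval g2 v = fock_eval (fun w => g1 w + g2 w) v.
Proof. by rewrite /fock_eval -big_split; apply: eq_bigr => p _; rewrite mulrDr. Qed.

Lemma fock_eval_lin_ext g F v :
  fock_eval g (lin_ext F v) = fock_eval (fun w => fock_eval g (F w)) v.
Proof.
rewrite /fock_eval /lin_ext big_flatten big_map; apply: eq_bigr => p _.
by rewrite big_map mulr_sumr; apply: eq_bigr => q _; rewrite mulrA.
Qed.

Lemma fock_eval_Omega g : fock_eval g (Omega B) = g [::].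
Proof. by rewrite /fock_eval big_seq1 mul1r. Qed.

Definition deg_le1 (a : R[i]) (f : B -> R[i]) (w : seq B) : R[i] :=
  match w with [::] => a | [:: x] => f x | _ => 0 end.

Lemma inner_Omega star v :
  inner star phi gamma v (Omega B) = fock_eval (deg_le1 1 (fun=> 0)) v.
Proof.
apply: eq_bigr => p _; rewrite big_seq1 /= conjC1 mulr1.
by case: p.2 => [|x [|y w]].
Qed.

Fixpoint lam_chain (p : seq B) : B :=
  match p with
  | [::] => 0
  | [:: u] => u
  | u :: p' => Lam u (lam_chain p')
  end.

Definition fock_cumulant (w : seq B) : R[i] :=
  if w is u :: p then phi (u * lam_chain p) else 0.

Lemma lam_chain_rcons us un : lam_chain (rcons us un) = foldr Lam un us.
Proof. by elim: us => //= u [|v us] <-. Qed.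

Lemma opprod_rcons (Ys : seq (fock B -> fock B)) Y v :
  opprod (rcons Ys Y) v = opprod Ys (Y v).
Proof. by elim: Ys => //= Y' Ys ->. Qed.

Lemma opprod_a_zero us c x :
  opprod (map (a_zero Lam) us) [:: (c, [:: x])] = [:: (c, [:: foldr Lam x us])].
Proof. by elim: us => //= u us ->; rewrite /a_zero /lin_ext /= mulr1. Qed.

Lemma inner_a_minus_a_zero_a_plus star u1 us un :
  inner star phi gamma
    (opprod (a_minus phi gamma u1 :: rcons (map (a_zero Lam) us) (a_plus un))
      (Omega B)) (Omega B) =
  fock_cumulant (u1 :: rcons us un).
Proof.
rewrite inner_Omega /= opprod_rcons /a_plus /lin_ext /= mulr1 opprod_a_zero.
rewrite /a_minus /lin_ext /fock_eval big_seq1 /= !mul1r mulr1.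
by rewrite lam_chain_rcons.
Qed.

Hypothesis gp0 : forall b, gp phi gamma b = 0.

Lemma fock_eval_Xop u a f v : f 0 = 0 ->
  fock_eval (deg_le1 a f) (Xop phi gamma Lam u v) =
  fock_eval (deg_le1 (f u) (fun x => phi (u * x) * a + f (Lam u x))) v.
Proof.
move=> f0; rewrite /Xop !fock_eval_cat !fock_eval_lin_ext !fock_evalD.
apply: eq_bigr => -[c [|x [|y w]]] _ /=; congr (_ * _);
  rewrite /fock_eval ?big_nil ?big_seq1 /= ?gp0 ?mul0r ?mul1r ?addr0 ?add0r //.
by case: w.
Qed.

Fixpoint xpullback (a : R[i]) (f : B -> R[i]) (w : seq B) : R[i] :=
  if w is u :: w' then xpullback (f u) (fun x => phi (u * x) * a + f (Lam u x)) w'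
  else a.

Hypotheses (phi0 : phi 0 = 0) (Lam0 : forall b, Lam b 0 = 0).

Lemma fock_eval_opprod_Xop w a f : f 0 = 0 ->
  fock_eval (deg_le1 a f) (opprod (map (Xop phi gamma Lam) w) (Omega B)) =
  xpullback a f w.
Proof.
elim: w a f => [|u w IH] a f f0 /=; first exact: fock_eval_Omega.
by rewrite fock_eval_Xop // IH // mulr0 phi0 mul0r Lam0 f0 addr0.
Qed.

Lemma xpullback_boolean_moment w a f :
  xpullback a f w = a * boolean_moment fock_cumulant w +
    \sum_(1 <= k < (size w).+1)
      f (lam_chain (take k w)) * boolean_moment fock_cumulant (drop k w).
Proof.
elim: w a f => [|u w IH] a f.
  by rewrite boolean_moment_nil mulr1 big_geq ?addr0.
rewrite [xpullback _ _ _]/= IH [boolean_moment _ (u :: w)]boolean_moment_first_block //.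
rewrite (big_nat_recl (size w).+1) // (big_nat_recl (size w).+1) //.
rewrite [take 1 _]/= [drop 1 _]/= take0 drop0 [fock_cumulant _]/= [lam_chain _]/=.
rewrite mulr0 phi0 mul0r add0r addrCA; congr (_ + _).
rewrite mulr_sumr -big_split.
apply: eq_big_nat => k /andP[k_gt0 k_le].
rewrite [take k.+1 _]/= [drop k.+1 _]/=.
have: take k w != [::] by rewrite -size_eq0 size_takel -?lt0n //; lia.
case: (take k w) => [|x p] // _.
by rewrite /= mulrDl mulrA [a * _]mulrC.
Qed.

Lemma psi_Xop star w :
  psi star phi gamma (map (Xop phi gamma Lam) w) = boolean_moment fock_cumulant w.
Proof.
rewrite /psi inner_Omega fock_eval_opprod_Xop // xpullback_boolean_moment mul1r.
by rewrite big1 ?addr0 // => k _; rewrite mul0r.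
Qed.

Lemma boolean_cumulants_Xop star Bc : boolean_cumulants star phi gamma Bc ->
  forall w, (0 < size w)%N -> Bc (map (Xop phi gamma Lam) w) = fock_cumulant w.
Proof.
move=> Bc_cumulants; apply: boolean_cumulants_unique => w w_gt0.
rewrite -(psi_Xop star) Bc_cumulants ?size_map // /boolean_moment big_filter.
by apply: eq_bigr => c _; rewrite blocks_map big_map.
Qed.

End VacuumExpectation.

Lemma morph_add0 (U V : zmodType) (h : U -> V) : {morph h : x y / x + y} -> h 0 = 0.
Proof. by move=> hD; apply: (@addrI _ (h 0)); rewrite -hD !addr0. Qed.

Theorem corollary3p5 (R : realType) (B : algType R[i]) (star : B -> B)
  (phi : B -> R[i]) (gamma : B -> B) (Lam : B -> B -> B) :
  is_involution star ->
  star_linear_functional star phi ->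
  star_linear_map star gamma ->
  star_bilinear_map star Lam ->
  positive_functional star phi ->
  faithful_functional star phi ->
  completely_positive star (gp phi gamma) ->
  (forall b u v : B, phi (star v * Lam b u) = phi (star (Lam (star b) v) * u)) ->
  (forall b u v : B, gamma (star v * Lam b u) = gamma (star (Lam (star b) v) * u)) ->
  (* gamma = - phi *)
  (forall b : B, gamma b = - (phi b *: 1)) ->
  forall Bc : seq (fock B -> fock B) -> R[i],
  boolean_cumulants star phi gamma Bc ->
  forall (u1 un : B) (us : seq B),
    Bc (map (Xop phi gamma Lam) (u1 :: rcons us un)) =
    inner star phi gamma
      (opprod (a_minus phi gamma u1 :: rcons (map (a_zero Lam) us) (a_plus un))
        (Omega B))
      (Omega B).
Proof.
move=> _ [phi_lin _] _ [_ Lam_lin _] _ _ _ _ _ gamma_eq Bc Bc_cumulants u1 un us.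
have gp0 b : gp phi gamma b = 0 by rewrite /gp gamma_eq addNr.
have phi0 : phi 0 = 0.
  by apply: morph_add0 => x y; have := phi_lin 1 x y; rewrite scale1r mul1r.
have Lam0 b : Lam b 0 = 0.
  by apply: morph_add0 => x y; have := Lam_lin 1 x y b; rewrite !scale1r.
by rewrite inner_a_minus_a_zero_a_plus (boolean_cumulants_Xop gp0 phi0 Lam0 Bc_cumulants).
Qed.
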